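(* Let $\mathbf{Q}=(Q,Z,\cdot)$ be a finite automaton, $q\in Q$ and $a\in Z$. If the identity $\Gamma(\mathbf{Q},q)$ holds in a Conway category $\mathcal{C}$, then so does the identity $\Gamma(\mathbf{Q},qa)$.
   Context: Cartesian categories have chosen finite products (terminal object $T$, projections $\pi_i$, tupling $\langle\cdot\rangle$, $!_A:A\to T$, $f\times g$), strictly associative; composition is written $g\circ f$; $\Delta_{A^n}=\langle 1_A,\ldots,1_A\rangle:A\to A^n$. A dagger operation maps $f:A\times C\to A$ to $f^\dagger:C\to A$. A Conway category is a cartesian category with dagger satisfying: $(f\circ(1_A\times g))^\dagger=f^\dagger\circ g$ ($f:A\times B\to A$, $g:C\to B$); $f^{\dagger\dagger}=(f\circ(\Delta_{A^2}\times 1_C))^\dagger$ ($f:A\times A\times C\to A$); $(f\circ\langle g,\pi_2^{A\times C}\rangle)^\dagger=f\circ\langle (g\circ\langle f,\pi_2^{B\times C}\rangle)^\dagger,1_C\rangle$ ($f:B\times C\to A$, $g:A\times C\to B$). A finite automaton $\mathbf{Q}=(Q,Z,\cdot)$ has finite nonempty state set $Q$, finite nonempty input alphabet $Z$ and action $Q\times Z\to Q$, written $qa=q\cdot a$. Write $Q=\{q_1,\ldots,q_n\}$, identified with $\{1,\ldots,n\}$, and $Z=\{a_1,\ldots,a_m\}$. For an object $A$ and $i\in[n]$ let $\rho_i^{\mathbf{Q},A}=\langle\pi^{A^n}_{ia_1},\ldots,\pi^{A^n}_{ia_m}\rangle:A^n\to A^m$ ($ia_j$ is the index of $q_i\cdot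 a_j$). For $f:A^m\times C\to A$ let $f^{\mathbf{Q},A}:A^n\times C\to A^n$ have components $\pi_i^{A^n}\circ f^{\mathbf{Q},A}=f\circ(\rho_i^{\mathbf{Q},A}\times 1_C)$. For a state $q_i$, the identity $\Gamma(\mathbf{Q},q_i)$ holds in $\mathcal{C}$ if $\pi_i^{A^n}\circ(f^{\mathbf{Q},A})^\dagger=(f\circ(\Delta_{A^m}\times 1_C))^\dagger$ for all objects $A,C$ and all $f:A^m\times C\to A$. *)

From mathcomp Require Import all_boot.
Set Implicit Arguments.
Unset Strict Implicit.
Unset Printing Implicit Defensive.

Record CartCat := {
  ob : Type;
  hom : ob -> ob -> Type;
  idm : forall A, hom A A;
  comp : forall A B C, hom B C -> hom A B -> hom A C;   (* comp g f = g o f *)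
  comp_idl : forall A B (f : hom A B), comp (idm B) f = f;
  comp_idr : forall A B (f : hom A B), comp f (idm A) = f;
  comp_assoc : forall A B C D (h : hom C D) (g : hom B C) (f : hom A B),
      comp h (comp g f) = comp (comp h g) f;
  term : ob;
  bang : forall A, hom A term;
  bang_uniq : forall A (f : hom A term), f = bang A;
  prod : ob -> ob -> ob;
  pi1 : forall A B, hom (prod A B) A;
  pi2 : forall A B, hom (prod A B) B;
  pair : forall C A B, hom C A -> hom C B -> hom C (prod A B);
  pi1_pair : forall C A B (f : hom C A) (g : hom C B), comp (pi1 A B) (pair f g) = f;
  pi2_pair : forall C A B (f : hom C A) (g : hom C B), comp (pi2 A B) (pair f g) = g;
  pair_eta : forall C A B (h : hom C (prod A B)),
      pair (comp (pi1 A B) h) (comp (pi2 A B) h) = h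
}.

Arguments idm {c} A.
Arguments comp {c A B C}.
Arguments bang {c} A.
Arguments pi1 {c} A B.
Arguments pi2 {c} A B.
Arguments pair {c C A B}.

Section Derived.
Variable X : CartCat.

Definition pmap (A B A' B' : ob X) (f : hom A A') (g : hom B B') :
    hom (prod A B) (prod A' B') :=
  pair (comp f (pi1 A B)) (comp g (pi2 A B)).

Definition assoc (A B C : ob X) : hom (prod (prod A B) C) (prod A (prod B C)) :=
  pair (comp (pi1 A B) (pi1 _ C))
       (pair (comp (pi2 A B) (pi1 _ C)) (pi2 _ C)).

(* powS A k = A^(k+1), right-nested: A^1 = A, A^(k+2) = A x A^(k+1) *)
Fixpoint powS (A : ob X) (k : nat) : ob X :=
  match k with 0 => A | k'.+1 => prod A (powS A k') end.

(* the i-th projection A^(k+1) -> A (indices from 0; only used for i <= k) *)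
Fixpoint projS (A : ob X) (k : nat) (i : nat) : hom (powS A k) A :=
  match k return hom (powS A k) A with
  | 0 => idm A
  | k'.+1 => match i with
             | 0 => pi1 A (powS A k')
             | j.+1 => comp (projS A k' j) (pi2 A (powS A k'))
             end
  end.

Fixpoint tupS (C A : ob X) (k : nat) (fs : nat -> hom C A) : hom C (powS A k) :=
  match k return hom C (powS A k) with
  | 0 => fs 0
  | k'.+1 => pair (fs 0) (tupS k' (fun j => fs j.+1))
  end.

Definition diagS (A : ob X) (k : nat) : hom A (powS A k) :=
  tupS k (fun _ => idm A).

End Derived.

Record ConwayCat := {
  ccat :> CartCat;
  dagger : forall (A C : ob ccat), hom (prod A C) A -> hom C A;
  conway_param : forall (A B C : ob ccat) (f : hom (prod A B) A) (g : hom C B),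
      dagger (comp f (pmap (idm A) g)) = comp (dagger f) g;
  conway_double : forall (A C : ob ccat) (f : hom (prod A (prod A C)) A),
      dagger (dagger f) =
      dagger (comp f (comp (assoc A A C) (pmap (diagS A 1) (idm C))));
  conway_comp : forall (A B C : ob ccat) (f : hom (prod B C) A) (g : hom (prod A C) B),
      dagger (comp f (pair g (pi2 A C))) =
      comp f (pair (dagger (comp g (pair f (pi2 B C)))) (idm C))
}.

Arguments dagger {c A C}.

(* Finite automata: states 'I_n.+1 (= q_1..q_{n+1}), inputs 'I_m.+1,    *)
Section Gamma.
Variables (X : ConwayCat) (n m : nat) (delta : 'I_n.+1 -> 'I_m.+1 -> 'I_n.+1).

Definition rho (A : ob X) (i : nat) : hom (powS A n) (powS A m) :=
  tupS m (fun j => projS A n (delta (inord i) (inord j))).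

Definition fQ (A C : ob X) (f : hom (prod (powS A m) C) A) :
    hom (prod (powS A n) C) (powS A n) :=
  tupS n (fun i => comp f (pmap (rho A i) (idm C))).

Definition Gamma (q : 'I_n.+1) : Prop :=
  forall (A C : ob X) (f : hom (prod (powS A m) C) A),
    comp (projS A n q) (dagger (fQ f)) =
    dagger (comp f (pmap (diagS A m) (idm C))).

End Gamma.

From Pilot Require Import Defs.
From mathcomp Require Import all_boot.

(* Apply Gamma(Q, q) at the object A x A to F = <f, pi_a o pi1> o (pi1^m x 1),
   which runs f on first components and copies the first component of the
   a-th input.  The composition identity, in the form
   (h o (k x 1))^+ = h o <(k o h)^+, 1>, gives that the q-th component of
   (F^Q)^+ is <f o (rho_q x 1), pi_(qa) o pi1> o <(f^Q)^+, 1> and that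
   (F o (Delta x 1))^+ is <f o (Delta x 1), pi1> o <(f o (Delta x 1))^+, 1>.
   Comparing second coordinates yields Gamma(Q, qa). *)

Local Notation pmap := Defs.pmap.
Local Notation "g ∘ f" := (Defs.comp g f) (at level 40, left associativity).

Arguments comp_assoc {c A B C D}.
Arguments comp_idl {c A B}.
Arguments comp_idr {c A B}.
Arguments pi1_pair {c C A B}.
Arguments pi2_pair {c C A B}.
Arguments pair_eta {c C A B}.

Section Cartesian.
Variable X : CartCat.
Implicit Types A B C D : ob X.

Lemma pair_ext C A B (u v : hom C (prod A B)) :
  pi1 A B ∘ u = pi1 A B ∘ v -> pi2 A B ∘ u = pi2 A B ∘ v -> u = v.
Proof. by move=> h1 h2; rewrite -(pair_eta u) -(pair_eta v) h1 h2. Qed.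

Lemma pair_comp D C A B (f : hom C A) (g : hom C B) (h : hom D C) :
  pair f g ∘ h = pair (f ∘ h) (g ∘ h).
Proof. by apply: pair_ext; rewrite comp_assoc ?pi1_pair ?pi2_pair. Qed.

Lemma pmap_pair D A B A' B' (f : hom A A') (g : hom B B') (h : hom D A)
    (k : hom D B) :
  pmap f g ∘ pair h k = pair (f ∘ h) (g ∘ k).
Proof. by rewrite /Defs.pmap pair_comp -!comp_assoc pi1_pair pi2_pair. Qed.

Lemma pmap_comp A B A' B' A'' B'' (f : hom A' A'') (g : hom B' B'')
    (f' : hom A A') (g' : hom B B') :
  pmap f g ∘ pmap f' g' = pmap (f ∘ f') (g ∘ g').
Proof. by rewrite {2}/Defs.pmap pmap_pair /Defs.pmap !comp_assoc. Qed.

Lemma pi1_pmap A B A' B' (f : hom A A') (g : hom B B') :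
  pi1 A' B' ∘ pmap f g = f ∘ pi1 A B.
Proof. exact: pi1_pair. Qed.

Lemma tupS_comp D C A k (fs : nat -> hom C A) (h : hom D C) :
  tupS k fs ∘ h = tupS k (fun j => fs j ∘ h).
Proof. by elim: k fs => [|k IH] fs //=; rewrite pair_comp IH. Qed.

Lemma projS_tupS C A k j (fs : nat -> hom C A) :
  j <= k -> projS A k j ∘ tupS k fs = fs j.
Proof.
elim: k j fs => [|k IH] [|j] fs //= hj.
- by rewrite comp_idl.
- by rewrite pi1_pair.
- by rewrite -comp_assoc pi2_pair IH.
Qed.

Lemma eq_tupS C A k (fs gs : nat -> hom C A) :
  (forall j, j <= k -> fs j = gs j) -> tupS k fs = tupS k gs.
Proof.
elim: k fs gs => [|k IH] fs gs h /=; first exact: h.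
by rewrite (h 0) // (IH (fun j => fs j.+1) (fun j => gs j.+1)) // => j hj; exact: h.
Qed.

Definition powmap {B A} k (h : hom B A) : hom (powS B k) (powS A k) :=
  tupS k (fun j => h ∘ projS B k j).

Lemma projS_powmap B A k j (h : hom B A) :
  j <= k -> projS A k j ∘ powmap k h = h ∘ projS B k j.
Proof. exact: projS_tupS. Qed.

Lemma powmap_tupS C B A k (h : hom B A) (fs : nat -> hom C B) :
  powmap k h ∘ tupS k fs = tupS k (fun j => h ∘ fs j).
Proof.
rewrite tupS_comp; apply: eq_tupS => j hj.
by rewrite -comp_assoc projS_tupS.
Qed.

Lemma powmap_diagS B A k (h : hom B A) :
  powmap k h ∘ diagS B k = diagS A k ∘ h.
Proof.
rewrite powmap_tupS /diagS tupS_comp; apply: eq_tupS => j _.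
by rewrite comp_idr comp_idl.
Qed.

End Cartesian.

Arguments powmap {X B A}.

Lemma dagger_comp_pmap (X : ConwayCat) (A B C : ob X) (h : hom (prod B C) A)
    (k : hom A B) :
  dagger (h ∘ pmap k (idm C)) = h ∘ pair (dagger (k ∘ h)) (idm C).
Proof.
have -> : pmap k (idm C) = pair (k ∘ pi1 A C) (pi2 A C) by rewrite /Defs.pmap comp_idl.
by rewrite conway_comp -comp_assoc pi1_pair.
Qed.

Section Automaton.
Variables (X : ConwayCat) (n m : nat) (delta : 'I_n.+1 -> 'I_m.+1 -> 'I_n.+1).

Lemma projS_rho (A : ob X) (i : nat) (a : 'I_m.+1) :
  projS A m a ∘ rho delta A i = projS A n (delta (inord i) a).
Proof. by rewrite projS_tupS ?inord_val // -ltnS. Qed.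

Lemma powmap_rho (B A : ob X) (h : hom B A) (i : nat) :
  powmap m h ∘ rho delta B i = rho delta A i ∘ powmap n h.
Proof.
rewrite powmap_tupS /rho tupS_comp; apply: eq_tupS => j _.
by rewrite projS_powmap // -ltnS.
Qed.

Lemma fQ_comp_powmap (B A C : ob X) (h : hom B A)
    (H : hom (prod (powS A m) C) B) :
  fQ delta (H ∘ pmap (powmap m h) (idm C)) =
  tupS n (fun i => H ∘ pmap (rho delta A i) (idm C)) ∘ pmap (powmap n h) (idm C).
Proof.
rewrite /fQ tupS_comp; apply: eq_tupS => i _.
by rewrite -!comp_assoc !pmap_comp powmap_rho comp_idl.
Qed.

End Automaton.

Theorem lemma4p3 (X : ConwayCat) (n m : nat)
    (delta : 'I_n.+1 -> 'I_m.+1 -> 'I_n.+1) (q : 'I_n.+1) (a : 'I_m.+1) :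
  Gamma X delta q -> Gamma X delta (delta q a).
Proof.
move=> Gamma_q A C f.
pose H := pair f (projS A m a ∘ pi1 _ C).
pose K i := H ∘ pmap (rho delta A i) (idm C).
pose F := H ∘ pmap (powmap m (pi1 A A)) (idm C).
have dagger_fQ_F : dagger (fQ delta F) = tupS n K ∘ pair (dagger (fQ delta f)) (idm C).
  rewrite fQ_comp_powmap dagger_comp_pmap powmap_tupS; do 3 f_equal.
  by apply: eq_tupS => i _; rewrite comp_assoc pi1_pair.
have dagger_F_diag : dagger (F ∘ pmap (diagS _ m) (idm C)) =
    H ∘ pmap (diagS A m) (idm C) ∘ pair (dagger (f ∘ pmap (diagS A m) (idm C))) (idm C).
  have -> : F ∘ pmap (diagS _ m) (idm C) = H ∘ pmap (diagS A m) (idm C) ∘ pmap (pi1 A A) (idm C).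
    by rewrite -!comp_assoc !pmap_comp powmap_diagS.
  by rewrite dagger_comp_pmap comp_assoc pi1_pair.
have pi2_H B (h : hom B (powS A m)) :
    pi2 A A ∘ H ∘ pmap h (idm C) = projS A m a ∘ h ∘ pi1 B C.
  by rewrite pi2_pair -comp_assoc pi1_pmap comp_assoc.
move: (Gamma_q (prod A A) C F); rewrite dagger_fQ_F dagger_F_diag.
move/(f_equal (Defs.comp (pi2 A A))).
rewrite [projS _ n q ∘ _]comp_assoc projS_tupS ?leq_ord //.
rewrite !comp_assoc !pi2_H projS_rho inord_val /diagS projS_tupS ?leq_ord //.
by rewrite -!comp_assoc !pi1_pair comp_idl.
Qed.
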